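(* Let $\Omega\subset\mathbb{R}^{n+1}$ be a compact convex body with $C^1$ boundary, and let $(\Omega_k)_{k\ge1}$ be a sequence of smooth uniformly convex bodies converging to $\Omega$ in Hausdorff distance. Then for any $\Theta\in(0,1)$ there exists $r(\Theta)>0$ depending only on $\Omega$ and $\Theta$ such that $$\max\big(\omega_\Omega(r(\Theta)),\omega_{\Omega_k}(r(\Theta))\big)<\sqrt{2-2\Theta}\qquad\text{for all }k\in\mathbb{N}.$$
   Context: For a convex body $D$ with $C^1$ boundary and outward unit normal map $\mathcal{N}_D$, $\omega_D(r):=\sup\{|\mathcal{N}_D(X_1)-\mathcal{N}_D(X_2)|:X_1,X_2\in\partial D,\ |X_1-X_2|<r\}$. A convex set $D$ is uniformly convex if there is $R>0$ with $D\subset B^{n+1}_R(X-R\nu)$ for every $X\in\partial D$ and every outward unit normal $\nu$ at $X$. Hausdorff distance: $d_H(A,B)=\max(\sup_{a\in A}\mathrm{dist}(a,B),\sup_{b\in B}\mathrm{dist}(b,A))$. *)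

(* R^{n+1} is modelled as 'rV[R]_(n.+1) with the
   Euclidean inner product/norm defined below; topological notions (open,
   compact, interior, closure, continuity) are the library's, for the product
   topology on 'rV, which coincides with the Euclidean topology. *)
From HB Require Import structures.
From mathcomp Require Import all_boot all_order all_algebra.
From mathcomp Require Import all_classical all_reals all_analysis.
Set Implicit Arguments. Unset Strict Implicit. Unset Printing Implicit Defensive.
Import Order.TTheory GRing.Theory Num.Theory.
Import numFieldNormedType.Exports.
Local Open Scope classical_set_scope.
Local Open Scope ring_scope.

Section Defs.
Variables (R : realType) (n : nat).
Local Notation V := 'rV[R]_n.+1.

Definition edot (u v : V) : R := \sum_(i < n.+1) u ord0 i * v ord0 i.
Definition enorm (u : V) : R := Num.sqrt (edot u u).

Definition bdry (D : set V) : set V := closure D `\` interior D.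

Definition convex_set (D : set V) : Prop :=
  forall x y t, D x -> D y -> 0 <= t -> t <= 1 -> D (t *: x + (1 - t) *: y).

Definition convex_body (D : set V) : Prop :=
  compact D /\ convex_set D /\ interior D !=set0.

Definition outward_unit_normal (D : set V) (X nu : V) : Prop :=
  enorm nu = 1 /\ forall Y, D Y -> edot nu (Y - X) <= 0.

Definition C1_on (U : set V) (F : V -> R) : Prop :=
  {within U, continuous F} /\
  forall v : V, (forall y, U y -> derivable F y v) /\
                {within U, continuous (fun y => 'D_v F y)}.

Fixpoint iterD (vs : seq V) (F : V -> R) : V -> R :=
  if vs is v :: vs' then (fun y => 'D_v (iterD vs' F) y) else F.

Definition Cinf_on (U : set V) (F : V -> R) : Prop :=
  forall (vs : seq V) (v : V),
    (forall y, U y -> derivable (iterD vs F) y v) /\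
    {within U, continuous (iterD vs F)}.

Definition boundary_of_class (P : set V -> (V -> R) -> Prop) (D : set V) : Prop :=
  forall X, bdry D X ->
    exists (U : set V) (F : V -> R),
      [/\ open U, U X, P U F, (exists v : V, 'D_v F X != 0) &
          D `&` U = [set y | U y /\ F y <= 0]].

Definition C1_boundary (D : set V) := boundary_of_class C1_on D.
Definition smooth_boundary (D : set V) := boundary_of_class Cinf_on D.

Definition omega (D : set V) (r : R) : R :=
  sup [set d | exists X1 X2 nu1 nu2,
        [/\ bdry D X1 /\ bdry D X2, enorm (X1 - X2) < r,
            outward_unit_normal D X1 nu1, outward_unit_normal D X2 nu2 &
            d = enorm (nu1 - nu2)]].

Definition uniformly_convex (D : set V) : Prop :=
  convex_set D /\
  exists Rad : R, 0 < Rad /\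
    forall X nu, bdry D X -> outward_unit_normal D X nu ->
      forall Y, D Y -> enorm (Y - (X - Rad *: nu)) <= Rad.

Definition edist_set (a : V) (B : set V) : R := inf [set enorm (a - b) | b in B].

Definition hausdorff_dist (A B : set V) : R :=
  Num.max (sup [set edist_set a B | a in A]) (sup [set edist_set b A | b in B]).

End Defs.

(* Near a point X of a compact set A with C^1 boundary, A contains to first
   order an open half-space: X + s v lies in A for small s > 0 whenever
   e.v < 0, where the unit vector e is the normalised gradient of a local
   defining function if X is a boundary point (and arbitrary if X is interior).
   Testing an approximate supporting normal nu (a unit vector with
   nu.(Z - X) <= tau on A) against finitely many such directions gives
   |nu - e| = O(tau), and compactness makes tau uniform in X.  An outward normal
   of a set that is Hausdorff-close to A, taken at a point close to X, is such
   an approximate normal of A at X; hence the normals of all Omk k with k large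
   are controlled by Om alone, while the finitely many other Omk k have C^1
   boundaries themselves. *)

From HB Require Import structures.
From mathcomp Require Import all_boot all_order all_algebra.
From mathcomp Require Import all_classical all_reals all_analysis.
From mathcomp Require Import ring lra.
Import Order.TTheory GRing.Theory Num.Theory.
Import numFieldNormedType.Exports.
Local Open Scope classical_set_scope.
Local Open Scope ring_scope.

Set Implicit Arguments. Unset Strict Implicit. Unset Printing Implicit Defensive.

Section Euclidean.
Variables (R : realType) (n : nat).
Local Notation V := 'rV[R]_n.+1.
Local Notation edot := (@edot R n).
Local Notation enorm := (@enorm R n).

Lemma edotC (u v : V) : edot u v = edot v u.
Proof. by apply: eq_bigr => i _; rewrite mulrC. Qed.

Lemma edotDr (u v w : V) : edot u (v + w) = edot u v + edot u w.
Proof. by rewrite /edot -big_split; apply: eq_bigr => i _; rewrite !mxE mulrDr. Qed.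

Lemma edotZr (c : R) (u v : V) : edot u (c *: v) = c * edot u v.
Proof. by rewrite /edot mulr_sumr; apply: eq_bigr => i _; rewrite !mxE mulrCA. Qed.

Lemma edotNr (u v : V) : edot u (- v) = - edot u v.
Proof. by rewrite -scaleN1r edotZr mulN1r. Qed.

Lemma edotBr (u v w : V) : edot u (v - w) = edot u v - edot u w.
Proof. by rewrite edotDr edotNr. Qed.

Lemma edotZl (c : R) (u v : V) : edot (c *: u) v = c * edot u v.
Proof. by rewrite edotC edotZr edotC. Qed.

Lemma edotDl (u v w : V) : edot (u + v) w = edot u w + edot v w.
Proof. by rewrite edotC edotDr !(edotC w). Qed.

Lemma edotBl (u v w : V) : edot (u - v) w = edot u w - edot v w.
Proof. by rewrite edotC edotBr !(edotC w). Qed.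

Lemma edot0l (u : V) : edot 0 u = 0.
Proof. by rewrite /edot big1 // => i _; rewrite mxE mul0r. Qed.

Lemma edot_delta (u : V) j : edot u (delta_mx 0 j) = u ord0 j.
Proof.
rewrite /edot (bigD1 j) //= big1 ?addr0; first by rewrite mxE !eqxx mulr1.
by move=> i /negbTE ij; rewrite mxE ij andbF mulr0.
Qed.

Lemma edotxx_ge0 (u : V) : 0 <= edot u u.
Proof. by apply: sumr_ge0 => i _; rewrite -expr2 sqr_ge0. Qed.

Lemma edotxx_eq0 (u : V) : (edot u u == 0) = (u == 0).
Proof.
apply/eqP/eqP => [uu0|->]; last exact: edot0l.
apply/rowP => i; rewrite mxE; apply/eqP.
move/psumr_eq0P: uu0 => /(_ (fun j _ => sqr_ge0 (u ord0 j)) i isT) /eqP.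
by rewrite mulf_eq0 orbb.
Qed.

Lemma enorm_ge0 (u : V) : 0 <= enorm u.
Proof. exact: sqrtr_ge0. Qed.

Lemma enorm_sqr (u : V) : enorm u ^+ 2 = edot u u.
Proof. by rewrite sqr_sqrtr // edotxx_ge0. Qed.

Lemma enorm0 : enorm 0 = 0.
Proof. by rewrite /enorm edot0l sqrtr0. Qed.

Lemma edot_CauchySchwarz (u v : V) : edot u v ^+ 2 <= edot u u * edot v v.
Proof.
have [/eqP|v_neq0] := eqVneq (edot v v) 0.
  by rewrite edotxx_eq0 => /eqP->; rewrite edotC !edot0l expr0n /= mulr0.
have vv_gt0 : 0 < edot v v by rewrite lt_def v_neq0 edotxx_ge0.
(* expand [0 <= |u - t v|^2] at the minimizing [t = u.v / v.v] *)
have := edotxx_ge0 (u - (edot u v / edot v v) *: v).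
rewrite !edotBl !edotBr !edotZl !edotZr (edotC v u).
have -> : edot u u - edot u v / edot v v * edot u v -
    (edot u v / edot v v * edot u v -
     edot u v / edot v v * (edot u v / edot v v * edot v v)) =
    (edot u u * edot v v - edot u v ^+ 2) / edot v v by field.
by rewrite pmulr_lge0 ?invr_gt0 // subr_ge0.
Qed.

Lemma normr_edot_le (u v : V) : `|edot u v| <= enorm u * enorm v.
Proof.
rewrite -(ler_pXn2r (_ : 0 < 2)%N) ?nnegrE ?mulr_ge0 ?enorm_ge0 //.
by rewrite exprMn !enorm_sqr real_normK ?num_real // edot_CauchySchwarz.
Qed.

Lemma edot_le (u v : V) : edot u v <= enorm u * enorm v.
Proof. exact: le_trans (ler_norm _) (normr_edot_le _ _). Qed.

Lemma edot_le_enorm (u v : V) : enorm u = 1 -> edot u v <= enorm v.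
Proof. by move=> u1; have := edot_le u v; rewrite u1 mul1r. Qed.

Lemma enormD (u v : V) : enorm (u + v) <= enorm u + enorm v.
Proof.
rewrite -(ler_pXn2r (_ : 0 < 2)%N) ?nnegrE ?addr_ge0 ?enorm_ge0 //.
rewrite enorm_sqr sqrrD !enorm_sqr edotDl !edotDr (edotC v u).
by have := edot_le u v; lra.
Qed.

Lemma enormN (u : V) : enorm (- u) = enorm u.
Proof. by rewrite /enorm -scaleN1r edotZl edotZr mulN1r mulNr opprK mul1r. Qed.

Lemma enormB (u v : V) : enorm (u - v) = enorm (v - u).
Proof. by rewrite -enormN opprB. Qed.

Lemma enormZ (c : R) (u : V) : enorm (c *: u) = `|c| * enorm u.
Proof. by rewrite /enorm edotZl edotZr mulrA sqrtrM ?sqr_ge0 // -expr2 sqrtr_sqr. Qed.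

Lemma enorm_le_sum_coord (u : V) : enorm u <= \sum_i `|u ord0 i|.
Proof.
rewrite -(ler_pXn2r (_ : 0 < 2)%N) ?nnegrE ?enorm_ge0 ?sumr_ge0 // enorm_sqr /edot.
pose P (x y : R) := 0 <= y /\ x <= y ^+ 2.
suff [] : P (\sum_i u ord0 i * u ord0 i) (\sum_i `|u ord0 i|) by [].
apply: (big_ind2 P) => [|x1 x2 y1 y2 [y1_ge0 x1y1] [y2_ge0 x2y2]|i].
- by split => //; rewrite expr0n.
- by split; [exact: addr_ge0 | rewrite sqrrD; nra].
- by split => //; rewrite -expr2 real_normK ?num_real.
Qed.

Lemma enorm_le_coord (u : V) (d : R) :
  (forall j, `|u ord0 j| <= d) -> enorm u <= n.+1%:R * d.
Proof.
move=> ud; apply: le_trans (enorm_le_sum_coord u) _.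
have -> : n.+1%:R * d = \sum_(i < n.+1) d by rewrite sumr_const card_ord mulr_natl.
exact: ler_sum.
Qed.

Lemma enorm_le_normr (u : V) : enorm u <= n.+1%:R * `|u|.
Proof.
apply: enorm_le_coord => i; rewrite (_ : `|u| = mx_norm u) // mx_normrE.
exact: (le_bigmax _ (fun ij : 'I_1 * 'I_n.+1 => `|u ij.1 ij.2|) (ord0, i)).
Qed.

Lemma nbhs_enorm_lt (x : V) (r : R) : 0 < r -> \forall y \near x, enorm (y - x) < r.
Proof.
move=> r_gt0; apply/nbhs_ballP; exists (r / n.+1%:R) => [|y]; first by rewrite /= divr_gt0.
rewrite -ball_normE /= => xy; apply: le_lt_trans (enorm_le_normr _) _.
by rewrite -opprB normrN mulrC -ltr_pdivlMr.
Qed.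

End Euclidean.

Section DirectionalDerivative.
Variables (R : realType) (n : nat).
Local Notation V := 'rV[R]_n.+1.
Local Notation edot := (@edot R n).
Variable F : V -> R.

Lemma is_derive_along_line (y w : V) (t : R) : derivable F (y + t *: w) w ->
  is_derive t 1 (fun s : R => F (y + s *: w)) ('D_w F (y + t *: w)).
Proof.
move=> dF.
have E : (fun h : R => h^-1 *: (((fun s => F (y + s *: w)) \o shift t) (h *: 1) -
                                F (y + t *: w))) =
         (fun h : R => h^-1 *: ((F \o shift (y + t *: w)) (h *: w) - F (y + t *: w))).
  by apply/funext => h /=; rewrite /shift /= scalerDl [h%:A]mulr1 addrCA.
by apply: DeriveDef; [rewrite /derivable E | rewrite /derive E].
Qed.

Lemma derive_lt0_decreasing (x v : V) : derivable F x v -> 'D_v F x < 0 ->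
  \forall s \near 0^'+, F (x + s *: v) < F x.
Proof.
move=> dv Dv_lt0; move: (cvg_dnbhs_at_right dv) => /cvgr_lt/(_ _ Dv_lt0) q_lt0.
near=> s; rewrite -subr_lt0 -(pmulr_rlt0 _ (_ : 0 < s^-1)) ?invr_gt0; last first.
  by near: s; exact: nbhs_right_gt.
by near: s; apply: filterS q_lt0 => s; rewrite /= /shift /= [s *: v + x]addrC.
Unshelve. all: by end_near.
Qed.

Lemma derive_quotient_shifted_cvg (U : set V) (x v w : V) :
  open U -> U x -> (forall y, U y -> derivable F y w) ->
  {for x, continuous (fun y => 'D_w F y)} ->
  h^-1 * (F (x + h *: v + h *: w) - F (x + h *: v)) @[h --> 0^'+] --> 'D_w F x.
Proof.
move=> oU Ux dw cw; apply/cvgrPdist_le => e e_gt0.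
have : nbhs x (U `&` [set y | `|'D_w F x - 'D_w F y| <= e]).
  by apply: filterI; [exact: open_nbhs_nbhs | move/cvgrPdist_le: cw; apply].
move=> /nbhs_ballP[r /= r_gt0 xrU].
have vw_gt0 : 0 < `|v| + `|w| + 1 by rewrite ltr_wpDl ?addr_ge0.
near=> h.
have h_gt0 : 0 < h by near: h; exact: nbhs_right_gt.
have hr : h * (`|v| + `|w| + 1) < r.
  by rewrite -ltr_pdivlMr //; near: h; apply: nbhs_right_lt; rewrite divr_gt0.
have segment_in_ball t : 0 <= t <= h -> ball x r (x + h *: v + t *: w).
  move=> /andP[t_ge0 th]; rewrite -ball_normE /= -addrA opprD addrA subrr add0r normrN.
  apply: le_lt_trans (ler_normD _ _) (le_lt_trans _ hr).
  rewrite !normrZ !ger0_norm ?(ltW h_gt0) // !mulrDr mulr1.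
  have : t * `|w| <= h * `|w| by rewrite ler_wpM2r.
  by have := normr_ge0 v; have := normr_ge0 w; lra.
pose phi t := F (x + h *: v + t *: w).
pose dphi t := 'D_w F (x + h *: v + t *: w).
have phi_derive t : t \in `]0, h[ -> is_derive t 1 phi (dphi t).
  rewrite in_itv /= => /andP[t_gt0 th]; apply: is_derive_along_line; apply: dw.
  by apply: (xrU _ (segment_in_ball t _)).1; rewrite !ltW.
have phi_cont : {within `[0, h], continuous phi}.
  apply: derivable_within_continuous => t; rewrite in_itv /= => /segment_in_ball/xrU[Ut _].
  by have [] := is_derive_along_line (dw _ Ut).
have [c c0h phi_mvt] := MVT_segment (ltW h_gt0) phi_derive phi_cont.
have -> : F (x + h *: v + h *: w) - F (x + h *: v) = phi h - phi 0.
  by rewrite /phi scale0r addr0.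
rewrite phi_mvt subr0 mulrCA mulVf ?mulr1 ?gt_eqF //.
by move: c0h; rewrite in_itv /= => /segment_in_ball/xrU[].
Unshelve. all: by end_near.
Qed.

Lemma deriveD_dir (U : set V) (x v w : V) : open U -> U x ->
  (forall y, U y -> derivable F y w) -> derivable F x v -> derivable F x (v + w) ->
  {for x, continuous (fun y => 'D_w F y)} ->
  'D_(v + w) F x = 'D_v F x + 'D_w F x.
Proof.
move=> oU Ux dw dv dvw cw.
rewrite [LHS]/derive cvg_at_rightE //; apply: cvg_lim => //.
have -> : (fun h : R => h^-1 *: ((F \o shift x) (h *: (v + w)) - F x)) =
    (fun h => h^-1 *: ((F \o shift x) (h *: v) - F x) +
              h^-1 * (F (x + h *: v + h *: w) - F (x + h *: v))).
  apply/funext => h; rewrite /= /shift /= [h *: v + x]addrC.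
  rewrite (_ : h *: (v + w) + x = x + h *: v + h *: w); last by rewrite scalerDr addrC addrA.
  rewrite -![h^-1 *: _]/(h^-1 * _); ring.
exact: cvgD (cvg_dnbhs_at_right dv) (derive_quotient_shifted_cvg _ oU Ux dw cw).
Qed.

Lemma deriveZ_dir (x v : V) (c : R) : derivable F x v -> 'D_(c *: v) F x = c * 'D_v F x.
Proof.
move=> dv; have [->|c_neq0] := eqVneq c 0; first by rewrite scale0r derive0 mul0r.
have c_dnbhs : (fun h : R => c * h) @ 0^' --> 0^'.
  move=> A [e e_gt0 eA]; exists (e / `|c|) => [|y ye y_neq0].
    by rewrite /= divr_gt0 // normr_gt0.
  apply: eA; last by rewrite mulf_neq0.
  by move: ye; rewrite /= !sub0r !normrN normrM ltr_pdivlMr ?normr_gt0 // mulrC.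
rewrite /derive; apply: cvg_lim => //.
have -> : (fun h : R => h^-1 *: ((F \o shift x) (h *: (c *: v)) - F x)) =
    (fun h => c * (((fun h : R => h^-1 *: ((F \o shift x) (h *: v) - F x)) \o *%R c) h)).
  apply/funext => h /=; rewrite scalerA [h * c]mulrC -![_^-1 *: _]/(_^-1 * _).
  by rewrite invfM !mulrA mulfV ?mul1r.
exact: cvgMl_tmp (cvg_comp _ _ c_dnbhs dv).
Qed.

Lemma C1_derive_edot (U : set V) (x : V) : open U -> U x -> C1_on U F ->
  forall v, 'D_v F x = edot (\row_j 'D_(delta_mx 0 j) F x) v.
Proof.
move=> oU Ux [_ C1F] v.
have dF v' y : U y -> derivable F y v' := (C1F v').1 y.
have cF v' : {for x, continuous (fun y => 'D_v' F y)}.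
  by move: (C1F v').2; rewrite continuous_open_subspace // => /(_ x (mem_set Ux)).
rewrite {1}(row_sum_delta v).
rewrite (@big_morph _ _ (fun v => 'D_v F x) 0 +%R); first last.
- exact: derive0.
- by move=> a b; apply: (deriveD_dir oU Ux) => //; apply: dF.
by apply: eq_bigr => j _; rewrite deriveZ_dir ?mxE ?[_ * v _ _]mulrC //; exact: dF.
Qed.

End DirectionalDerivative.

Lemma cvg_ray (R : realType) (V : normedModType R) (x v : V) :
  x + s *: v @[s --> 0^'+] --> x.
Proof.
apply: cvg_at_right_filter; rewrite -[X in _ --> X]addr0 -(scale0r v).
by apply: cvgD; [exact: cvg_cst | apply: cvgZr_tmp; exact: cvg_id].
Qed.

Section ApproximateNormals.
Variables (R : realType) (n : nat).
Local Notation V := 'rV[R]_n.+1.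
Local Notation edot := (@edot R n).
Local Notation enorm := (@enorm R n).

(* [outward_unit_normal D X] is [approx_normal D X 0] *)
Definition approx_normal (A : set V) (X : V) (tau : R) (nu : V) : Prop :=
  enorm nu = 1 /\ forall Z, A Z -> edot nu (Z - X) <= tau.

Definition approx_normals_close (A : set V) (X : V) (tau eps : R) : Prop :=
  forall nu1 nu2, approx_normal A X tau nu1 -> approx_normal A X tau nu2 ->
    enorm (nu1 - nu2) <= eps.

Definition lies_within (rho : R) (A D : set V) : Prop :=
  forall Z, A Z -> exists2 W, D W & enorm (Z - W) <= rho.

Lemma approx_normal_le (A : set V) (X nu : V) (tau tau' : R) :
  tau <= tau' -> approx_normal A X tau nu -> approx_normal A X tau' nu.
Proof. by move=> le_tau [nu1 nuA]; split=> // Z /nuA /le_trans; apply. Qed.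

Lemma approx_normal_move (A : set V) (X X' nu : V) (tau : R) :
  approx_normal A X tau nu -> approx_normal A X' (tau + enorm (X - X')) nu.
Proof.
move=> [nu1 nuA]; split=> // Z AZ.
have -> : Z - X' = (Z - X) + (X - X') by rewrite addrA subrK.
rewrite edotDr.
by apply: lerD; [exact: nuA | exact: edot_le_enorm].
Qed.

Lemma approx_normal_lies_within (A D : set V) (X nu : V) (tau rho : R) :
  lies_within rho A D -> approx_normal D X tau nu -> approx_normal A X (tau + rho) nu.
Proof.
move=> AD [nu1 nuD]; split=> // Z /AD[W DW ZW].
have -> : Z - X = (W - X) + (Z - W) by rewrite [RHS]addrC addrA subrK.
rewrite edotDr.
by apply: lerD; [exact: nuD | exact: le_trans (edot_le_enorm _ nu1) ZW].
Qed.

Lemma approx_normal_ray (A : set V) (X nu v : V) (tau s : R) :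
  approx_normal A X tau nu -> 0 < s -> A (X + s *: v) -> edot nu v <= tau / s.
Proof.
by move=> [_ nuA] s_gt0 /nuA; rewrite addrAC subrr add0r edotZr ler_pdivlMr // mulrC.
Qed.

Lemma lies_within_refl (A : set V) : lies_within 0 A A.
Proof. by move=> Z AZ; exists Z; rewrite ?subrr ?enorm0. Qed.

Lemma unit_close_of_proj_small (nu e : V) (delta : R) :
  enorm nu = 1 -> enorm e = 1 -> enorm (nu - edot nu e *: e) <= delta ->
  - 2^-1 <= edot nu e -> delta <= 2^-1 -> enorm (nu - e) <= 2 * delta.
Proof.
move=> nu1 e1 proj_le a_ge delta_le.
have ee : edot e e = 1 by rewrite -enorm_sqr e1 expr1n.
have nunu : edot nu nu = 1 by rewrite -enorm_sqr nu1 expr1n.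
set a := edot nu e in proj_le a_ge *.
have p_ge0 := enorm_ge0 (nu - a *: e).
have proj_sqr : enorm (nu - a *: e) ^+ 2 = 1 - a ^+ 2.
  by rewrite enorm_sqr !edotBl !edotBr !edotZl !edotZr (edotC e nu) ee nunu -/a; ring.
have dist_sqr : enorm (nu - e) ^+ 2 = 2 - 2 * a.
  by rewrite enorm_sqr !edotBl !edotBr (edotC e nu) ee nunu -/a; ring.
have a_le1 : a <= 1 by rewrite -e1; exact: edot_le_enorm.
have a_ge0 : 0 <= a by nra.
have delta_ge0 : 0 <= delta := le_trans p_ge0 proj_le.
rewrite -(ler_pXn2r (_ : 0 < 2)%N) ?nnegrE ?enorm_ge0 ?mulr_ge0 //.
by rewrite dist_sqr; nra.
Qed.

Definition tangent_halfspace (A : set V) (X e : V) : Prop :=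
  enorm e = 1 /\ forall v, edot e v < 0 -> \forall s \near 0^'+, A (X + s *: v).

Definition perp_delta (e : V) (j : 'I_n.+1) : V := delta_mx 0 j - e ord0 j *: e.

Lemma edot_perp_delta (e : V) j : enorm e = 1 -> edot e (perp_delta e j) = 0.
Proof. by move=> e1; rewrite edotBr edot_delta edotZr -enorm_sqr e1 expr1n mulr1 subrr. Qed.

Lemma edot_perp_deltaE (nu e : V) j : edot nu (perp_delta e j) = (nu - edot nu e *: e) ord0 j.
Proof. by rewrite !mxE edotBr edot_delta edotZr mulrC. Qed.

Lemma approx_normal_perp_le (A : set V) (X e nu : V) (s c : R) :
  enorm e = 1 -> 0 < s -> 0 <= c -> approx_normal A X (s * c) nu ->
  (forall j (b : bool),
     A (X + s *: ((if b then perp_delta e j else - perp_delta e j) - c *: e))) ->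
  A (X + s *: - e) ->
  enorm (nu - edot nu e *: e) <= n.+1%:R * (2 * c) /\ - c <= edot nu e.
Proof.
move=> e1 s_gt0 c_ge0 nuA perpA eA.
have nu_ray v : A (X + s *: v) -> edot nu v <= c.
  by move=> /(approx_normal_ray nuA s_gt0); rewrite mulrAC divff ?gt_eqF ?mul1r.
have ca_le : c * edot nu e <= c.
  by apply: ler_piMr => //; rewrite -e1; exact: edot_le_enorm nuA.1.
split; last by rewrite lerNl -edotNr nu_ray.
apply: enorm_le_coord => j; rewrite -edot_perp_deltaE.
have := nu_ray _ (perpA j true); rewrite edotBr edotZr => le1.
have := nu_ray _ (perpA j false); rewrite edotBr edotNr edotZr => le2.
by rewrite ler_norml; apply/andP; split; lra.
Qed.

Lemma tangent_halfspace_approx_normal (A : set V) (X e : V) (eps : R) :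
  tangent_halfspace A X e -> 0 < eps ->
  exists2 tau, 0 < tau & forall nu, approx_normal A X tau nu -> enorm (nu - e) <= eps.
Proof.
move=> [e1 eA] eps_gt0.
have m_gt0 : 0 < n.+1%:R :> R by rewrite ltr0n.
set eps1 := Num.min eps 1.
have eps1_gt0 : 0 < eps1 by rewrite lt_min eps_gt0 ltr01.
have [eps1_le eps1_le1] : eps1 <= eps /\ eps1 <= 1 by rewrite !ge_min !lexx orbT.
set c := eps1 / (4 * n.+1%:R).
have c_gt0 : 0 < c by rewrite divr_gt0 // mulr_gt0.
have c_le : c <= 4^-1.
  have : 1 <= n.+1%:R :> R by rewrite ler1n.
  by rewrite ler_pdivrMr ?mulr_gt0 //; nra.
have [s [s_gt0 perpA eA']] : exists s, [/\ 0 < s,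
    forall j (b : bool),
      A (X + s *: ((if b then perp_delta e j else - perp_delta e j) - c *: e))
    & A (X + s *: - e)].
  apply: (@filter_ex _ (0^'+)); near=> s; split.
  - by near: s; exact: nbhs_right_gt.
  - near: s; apply: filter_forall => j; apply: filter_forall => b; apply: eA.
    rewrite edotBr edotZr -enorm_sqr e1 expr1n mulr1.
    by case: b; rewrite ?edotNr edot_perp_delta ?oppr0 // sub0r oppr_lt0.
  - by near: s; apply: eA; rewrite edotNr -enorm_sqr e1 expr1n ltrN10.
exists (s * c) => [|nu nuA]; first exact: mulr_gt0.
have [proj_le a_ge] := approx_normal_perp_le e1 s_gt0 (ltW c_gt0) nuA perpA eA'.
have delta_eq : n.+1%:R * (2 * c) = eps1 / 2 by rewrite /c; field; rewrite gt_eqF.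
apply: le_trans (unit_close_of_proj_small nuA.1 e1 proj_le _ _) _; rewrite ?delta_eq.
- by apply: le_trans a_ge; lra.
- lra.
- lra.
Unshelve. all: by end_near.
Qed.

Lemma interior_tangent_halfspace (A : set V) (X : V) :
  interior A X -> tangent_halfspace A X (delta_mx 0 0).
Proof.
move=> XA; split=> [|v _]; last exact: cvg_ray XA.
by rewrite /enorm edot_delta mxE !eqxx sqrtr1.
Qed.

Lemma C1_boundary_tangent_halfspace (A : set V) (X : V) : C1_boundary A -> A X ->
  exists e, tangent_halfspace A X e.
Proof.
move=> C1A AX; have [Xint|Xnint] := pselect (interior A X).
  by exists (delta_mx 0 0); exact: interior_tangent_halfspace.
have [U [F [oU UX C1F [v0 Dv0] AU]]] := C1A X (conj (subset_closure AX) Xnint).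
set g := \row_j 'D_(delta_mx 0 j) F X.
have DF := C1_derive_edot oU UX C1F; rewrite -/g in DF.
have g_gt0 : 0 < enorm g.
  rewrite sqrtr_gt0 lt_def edotxx_ge0 andbT edotxx_eq0.
  by apply: contraNneq Dv0 => g0; rewrite DF g0 edot0l.
exists ((enorm g)^-1 *: g); split=> [|v].
  by rewrite enormZ ger0_norm ?invr_ge0 ?ltW // mulVf ?gt_eqF.
rewrite edotZl pmulr_rlt0 ?invr_gt0 // -DF => Dv_lt0.
have FX_le0 : F X <= 0 by have : (A `&` U) X by []; rewrite AU => -[].
near=> s.
have : [set y | U y /\ F y <= 0] (X + s *: v).
  split; first by near: s; apply: cvg_ray; exact: open_nbhs_nbhs.
  apply/ltW/(lt_le_trans _ FX_le0); near: s.
  by apply: derive_lt0_decreasing => //; apply: (C1F.2 v).1.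
by rewrite -AU => -[].
Unshelve. all: by end_near.
Qed.

Lemma C1_approx_normals_close (A : set V) (eps : R) : compact A -> C1_boundary A ->
  0 < eps -> exists2 tau, 0 < tau & forall X, A X -> approx_normals_close A X tau eps.
Proof.
move=> cA C1A eps_gt0.
have local X : A X -> \forall X' \near X & tau \near 0^'+, approx_normals_close A X' tau eps.
  move=> AX; have [e eX] := C1_boundary_tangent_halfspace C1A AX.
  have [tau tau_gt0 close_e] :=
    tangent_halfspace_approx_normal eX (divr_gt0 eps_gt0 (ltr0n _ 2)).
  have close_e' X' tau' nu : enorm (X' - X) < tau / 2 -> tau' < tau / 2 ->
      approx_normal A X' tau' nu -> enorm (nu - e) <= eps / 2.
    move=> X'X tau'_lt /(approx_normal_move X) nuA; apply/close_e/(approx_normal_le _ nuA).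
    lra.
  have tau2_gt0 : 0 < tau / 2 by rewrite divr_gt0.
  near=> X' tau' => nu1 nu2 nu1A nu2A.
  have XX' : enorm (X' - X) < tau / 2 by near: X'; exact: nbhs_enorm_lt.
  have tau'_lt : tau' < tau / 2 by near: tau'; exact: nbhs_right_lt.
  have := enormD (nu1 - e) (- (nu2 - e)); rewrite enormN opprB addrA subrK.
  by have := close_e' _ _ _ XX' tau'_lt nu1A; have := close_e' _ _ _ XX' tau'_lt nu2A; lra.
have [tau [tau_gt0 closeA]] :
    exists tau, 0 < tau /\ A `<=` (fun X => approx_normals_close A X tau eps).
  apply: (@filter_ex _ (0^'+)); near=> tau; split; first by near: tau; exact: nbhs_right_gt.
  by near: tau; exact: (compact_near_coveringP A).1 cA _ _ _ _ local.
by exists tau.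
Unshelve. all: by end_near.
Qed.

Definition normal_oscillation_le (D : set V) (r eps : R) : Prop :=
  forall Y1 Y2 nu1 nu2, bdry D Y1 -> bdry D Y2 -> enorm (Y1 - Y2) < r ->
    outward_unit_normal D Y1 nu1 -> outward_unit_normal D Y2 nu2 ->
    enorm (nu1 - nu2) <= eps.

Lemma omega_le (D : set V) (r eps : R) :
  0 <= eps -> normal_oscillation_le D r eps -> omega D r <= eps.
Proof.
move=> eps_ge0 osc; rewrite /omega.
set S := [set d | _]; have [S0|S_empty] := pselect (S !=set0).
  apply: ge_sup => // _ [Y1 [Y2 [nu1 [nu2 [[b1 b2] Y12 n1 n2 ->]]]]].
  exact: osc b1 b2 Y12 n1 n2.
by rewrite sup_out // => -[/S_empty].
Qed.

Lemma normal_oscillation_le_of_approx (A D : set V) (tau eps rho r : R) :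
  (forall X, A X -> approx_normals_close A X tau eps) -> closed D ->
  lies_within rho A D -> lies_within rho D A -> 3 * rho + r <= tau ->
  normal_oscillation_le D r eps.
Proof.
move=> closeA cD AD DA le_tau Y1 Y2 nu1 nu2 [Y1D _] [Y2D _] Y12 n1 n2.
rewrite -(closure_id D).1 // in Y1D Y2D.
have [Z AZ Y1Z] := DA _ Y1D.
have Y2Z : enorm (Y2 - Z) <= r + rho.
  have := enormD (Y2 - Y1) (Y1 - Z); rewrite addrA subrK enormB; lra.
have rho_ge0 : 0 <= rho := le_trans (enorm_ge0 _) Y1Z.
have n1' : approx_normal D Y1 0 nu1 := n1.
have n2' : approx_normal D Y2 0 nu2 := n2.
apply: (closeA Z AZ).
- apply: approx_normal_le (approx_normal_move Z (approx_normal_lies_within AD n1')).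
  by have := enorm_ge0 (Y1 - Y2); lra.
- apply: approx_normal_le (approx_normal_move Z (approx_normal_lies_within AD n2')).
  lra.
Qed.

Lemma C1_normal_oscillation_near0 (A : set V) (eps : R) : compact A -> C1_boundary A ->
  0 < eps -> \forall r \near 0^'+, normal_oscillation_le A r eps.
Proof.
move=> cA C1A eps_gt0; have [tau tau_gt0 closeA] := C1_approx_normals_close cA C1A eps_gt0.
have clA : closed A by exact: compact_closed.
near=> r; apply: (normal_oscillation_le_of_approx closeA clA (@lies_within_refl A)
  (@lies_within_refl A)).
by rewrite mulr0 add0r; near: r; exact: nbhs_right_ltW.
Unshelve. all: by end_near.
Qed.

Lemma compact_enorm_bounded (A : set V) :
  compact A -> exists M, forall x, A x -> enorm x <= M.
Proof.
move=> /compact_bounded[M [_ AM]]; exists (n.+1%:R * (`|M| + 1)) => x Ax.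
apply: le_trans (enorm_le_normr x) _; rewrite ler_wpM2l // AM //.
by rewrite (le_lt_trans (ler_norm M)) // ltrDl.
Qed.

Lemma lies_within_of_hausdorff_lt (A D : set V) (rho : R) : compact A -> D !=set0 ->
  hausdorff_dist A D < rho -> lies_within rho A D.
Proof.
move=> cA [W0 DW0]; rewrite /hausdorff_dist gt_max => /andP[AD_lt _] Z AZ.
have [M AM] := compact_enorm_bounded cA.
have edist_le X W : D W -> edist_set X D <= enorm (X - W).
  move=> DW; apply: ge_inf; last by exists W.
  by exists 0 => _ [W' _ <-]; exact: enorm_ge0.
have : edist_set Z D < rho.
  apply: le_lt_trans AD_lt; apply: ub_le_sup; last by exists Z.
  exists (M + enorm W0) => _ [X AX <-]; apply: le_trans (edist_le _ _ DW0) _.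
  by have := enormD X (- W0); rewrite enormN; have := AM _ AX; lra.
by move=> /inf_lt[|_ [W DW <-] /ltW]; [exists (enorm (Z - W0)), W0 | exists W].
Qed.

Lemma hausdorff_distC (A D : set V) : hausdorff_dist A D = hausdorff_dist D A.
Proof. exact: maxC. Qed.

Lemma normal_oscillation_le_of_hausdorff_lt (A D : set V) (tau eps r : R) :
  (forall X, A X -> approx_normals_close A X tau eps) -> compact A -> compact D ->
  A !=set0 -> D !=set0 -> hausdorff_dist D A < tau / 4 -> r <= tau / 4 ->
  normal_oscillation_le D r eps.
Proof.
move=> closeA cA cD A0 D0 hDA r_le; have clD : closed D by exact: compact_closed.
apply: (normal_oscillation_le_of_approx (rho := tau / 4) closeA clD).
- by apply: lies_within_of_hausdorff_lt cA D0 _; rewrite hausdorff_distC.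
- exact: lies_within_of_hausdorff_lt cD A0 hDA.
- lra.
Qed.

Lemma convex_body_neq0 (D : set V) : convex_body D -> D !=set0.
Proof. by move=> [_ [_ [X XD]]]; exists X; exact: nbhs_singleton. Qed.

Lemma smooth_boundary_C1 (D : set V) : smooth_boundary D -> C1_boundary D.
Proof.
move=> sD X DX; have [U [F [oU UX FU DF AU]]] := sD X DX.
exists U, F; split=> //; split=> [|v]; first by have [] := FU [::] 0.
by split; [have [] := FU [::] v | have [] := FU [:: v] 0].
Qed.

End ApproximateNormals.

Unset Implicit Arguments.

Theorem lemma5p4 (R : realType) (n : nat)
  (Om : set 'rV[R]_n.+1) (Omk : nat -> set 'rV[R]_n.+1) :
  convex_body Om -> C1_boundary Om ->
  (forall k, [/\ convex_body (Omk k), smooth_boundary (Omk k)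
                & uniformly_convex (Omk k)]) ->
  (fun k => hausdorff_dist (Omk k) Om) @ \oo --> (0 : R) ->
  forall Theta : R, 0 < Theta < 1 ->
  exists r : R, 0 < r /\
    forall k : nat,
      Num.max (omega Om r) (omega (Omk k) r) < Num.sqrt (2 - 2 * Theta).
Proof.
move=> bOm C1Om Omk_body hd Theta /andP[gt0_Theta lt1_Theta].
have [cOm Om0] := (bOm.1, convex_body_neq0 bOm).
have Omk_C1 k : [/\ compact (Omk k), C1_boundary (Omk k) & Omk k !=set0].
  have [bOmk /smooth_boundary_C1 C1Omk _] := Omk_body k.
  by split=> //; [exact: bOmk.1 | exact: convex_body_neq0].
set S := Num.sqrt (2 - 2 * Theta).
have S_gt0 : 0 < S by rewrite sqrtr_gt0; lra.
set eps := S / 2; have eps_gt0 : 0 < eps by rewrite divr_gt0.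
have [tau tau_gt0 closeOm] := C1_approx_normals_close cOm C1Om eps_gt0.
move/cvgr_lt: hd => /(_ _ (divr_gt0 tau_gt0 (ltr0n _ 4)))[K _ hdK].
have [r [r_gt0 oscOm oscI r_le]] : exists r, [/\ 0 < r, normal_oscillation_le Om r eps,
    forall k : 'I_K, normal_oscillation_le (Omk k) r eps & r <= tau / 4].
  apply: (@filter_ex _ (0^'+)); near=> r; split.
  - by near: r; exact: nbhs_right_gt.
  - by near: r; exact: C1_normal_oscillation_near0.
  - near: r; apply: filter_forall => k; have [cOmk C1Omk _] := Omk_C1 k.
    exact: C1_normal_oscillation_near0.
  - by near: r; apply: nbhs_right_ltW; rewrite divr_gt0.
exists r; split=> // k.
have eps_lt : eps < S by rewrite /eps; lra.
rewrite gt_max !(le_lt_trans (omega_le (ltW eps_gt0) _) eps_lt) //.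
have [kK|/hdK hdk] := ltnP k K; first exact: (oscI (Ordinal kK)).
have [cOmk _ Omk0] := Omk_C1 k.
exact: normal_oscillation_le_of_hausdorff_lt closeOm cOm cOmk Om0 Omk0 hdk r_le.
Unshelve. all: by end_near.
Qed.
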